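(* Let $n,k$ be integers with $1<k<n$ and $k>\frac14 n$. Then there exists a $k$-homogeneous partial latin square of order $n$ which is not completable.
   Context: A $k$-homogeneous partial latin square of order $n$ is an $n\times n$ array in which each cell is either blank or contains one of the symbols $\{1,2,\dots,n\}$, such that (i) no symbol occurs twice in any row or any column, (ii) each symbol occurs exactly $k$ times in the array, and (iii) each row and each column contains exactly $k$ filled cells. It is completable if its blank cells can be filled with symbols from $\{1,\dots,n\}$ so as to produce a latin square of order $n$ (an $n\times n$ array in which each symbol occurs exactly once in each row and each column). *)

From mathcomp Require Import all_boot.
Set Implicit Arguments. Unset Strict Implicit. Unset Printing Implicit Defensive.

(* An n x n array; cell (r,c) is blank (None) or contains a symbol (Some s),
   with symbols {1,..,n} represented by 'I_n = {0,..,n-1}. *)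
Definition parray (n : nat) := 'I_n -> 'I_n -> option 'I_n.

Definition is_partial_latin n (P : parray n) : Prop :=
  (forall (r c1 c2 s : 'I_n), P r c1 = Some s -> P r c2 = Some s -> c1 = c2) /\
  (forall (c r1 r2 s : 'I_n), P r1 c = Some s -> P r2 c = Some s -> r1 = r2).

Definition k_homogeneous_pls n (k : nat) (P : parray n) : Prop :=
  [/\ is_partial_latin P,
      forall s : 'I_n, #|[set rc : 'I_n * 'I_n | P rc.1 rc.2 == Some s]| = k,
      forall r : 'I_n, #|[set c : 'I_n | P r c != None]| = k &
      forall c : 'I_n, #|[set r : 'I_n | P r c != None]| = k].

Definition is_latin_square n (L : 'I_n -> 'I_n -> 'I_n) : Prop :=
  (forall r s : 'I_n, #|[set c : 'I_n | L r c == s]| = 1) /\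
  (forall c s : 'I_n, #|[set r : 'I_n | L r c == s]| = 1).

Definition completable n (P : parray n) : Prop :=
  exists L : 'I_n -> 'I_n -> 'I_n,
    is_latin_square L /\ forall r c s : 'I_n, P r c = Some s -> L r c = s.

(* Two obstructions to completion are used.
   - A dead cell (used when n <= 2k): a blank cell whose row and column
     together already contain all n symbols.  The squares are cyclic bands
     over Z_n: cell (i, i + d), d in D, holds i + g(d).  Such a band is
     |D|-homogeneous when g and g - id are injective on D.  An "interval
     band", where g and g - id map D onto intervals of length k, has a dead
     cell, except when n is odd and k = n - 1; in that case we take the
     latin square 2i - j minus a transversal and swap two entries of row 0.
   - Block counting (used when n > 2k): the block diagonal sum of two
     k-homogeneous squares of orders p = n - n/2 and q = n/2; counting the
     symbols < p of a completion in its top-right block forces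
     (p + q) k + p q <= p^2 + q^2, which fails since n < 4k. *)

From mathcomp Require Import all_boot all_algebra perm zify ring.
Set Implicit Arguments. Unset Strict Implicit. Unset Printing Implicit Defensive.
Import GRing.Theory.

Section Homogeneity.
Variable n : nat.
Implicit Types (P Q : parray n) (k : nat).

(* The column conditions of a partial latin square are the row conditions of
   its transpose; splitting the definition this way lets row arguments be
   reused for columns. *)
Definition transpose P : parray n := fun i j => P j i.

Definition latin_rows P : Prop :=
  forall r c1 c2 s : 'I_n, P r c1 = Some s -> P r c2 = Some s -> c1 = c2.

Definition filled_rows k P : Prop :=
  forall r : 'I_n, #|[set c | P r c != None]| = k.

Definition symbol_count k P : Prop :=
  forall s : 'I_n, #|[set rc : 'I_n * 'I_n | P rc.1 rc.2 == Some s]| = k.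

Lemma k_homogeneous_plsE k P :
  k_homogeneous_pls k P <->
  [/\ latin_rows P, latin_rows (transpose P), symbol_count k P,
      filled_rows k P & filled_rows k (transpose P)].
Proof. by split=> [[[? ?] ? ? ?]|[? ? ? ? ?]]. Qed.

Lemma latin_rows_ext P Q : P =2 Q -> latin_rows P -> latin_rows Q.
Proof. by move=> eqPQ HP r c1 c2 s; rewrite -!eqPQ; apply: HP. Qed.

Lemma filled_rows_ext k P Q : P =2 Q -> filled_rows k P -> filled_rows k Q.
Proof.
by move=> eqPQ HP r; rewrite -(HP r); apply: eq_card => c; rewrite !inE eqPQ.
Qed.

Lemma latin_row_inj (L : 'I_n -> 'I_n -> 'I_n) :
  is_latin_square L -> forall r, injective (L r).
Proof.
move=> [HL _] r c1 c2 eqL; have /eqP/cards1P[c Ec] := HL r (L r c1).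
have onlyc x : L r x = L r c1 -> x = c.
  by move=> Ex; apply/set1P; rewrite -Ec inE Ex.
by rewrite (onlyc c1) // (onlyc c2).
Qed.

Lemma latin_col_inj (L : 'I_n -> 'I_n -> 'I_n) :
  is_latin_square L -> forall c, injective (L^~ c).
Proof.
move=> [_ HL] c r1 r2 eqL; have /eqP/cards1P[r Er] := HL c (L r1 c).
have onlyr x : L x c = L r1 c -> x = r.
  by move=> Ex; apply/set1P; rewrite -Er inE Ex.
by rewrite (onlyr r1) // (onlyr r2).
Qed.

Lemma dead_cell P r c : P r c = None ->
  (forall s, (exists c', P r c' = Some s) \/ (exists r', P r' c = Some s)) ->
  ~ completable P.
Proof.
move=> blank cover [L [latinL extL]].
have [[c' Pc']|[r' Pr']] := cover (L r c).
  by move: blank; rewrite -(latin_row_inj latinL (extL _ _ _ Pc')) Pc'.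
by move: blank; rewrite -(latin_col_inj latinL (extL _ _ _ Pr')) Pr'.
Qed.

End Homogeneity.

Lemma card_ord_lt n K : (K <= n)%N -> #|[set i : 'I_n | (i < K)%N]| = K.
Proof.
by move=> leKn; rewrite -sum1dep_card (big_ord_narrow leKn) sum1_card card_ord.
Qed.

Section CyclicBand.
Variable m : nat.
Local Notation Zn := 'I_m.+1.
Local Open Scope ring_scope.
Implicit Types (D : {set Zn}) (g : Zn -> Zn).

Lemma inZpD a b : inZp (a + b) = inZp a + inZp b :> Zn.
Proof. by apply: val_inj; rewrite /= modnDm. Qed.

Lemma cyclic_intervals_cover k a (s : Zn) : (a <= k)%N -> (m.+1 <= a + k)%N ->
  (s < k)%N \/ exists2 x, (x < k)%N & s = inZp a + inZp x.
Proof.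
move=> leak lenak; case: (ltnP s k) => [|leks]; [by left | right].
have lesn := ltn_ord s; exists (s - a)%N; first by lia.
apply: val_inj; rewrite /= modnDm subnKC ?modn_small //; lia.
Qed.

Definition band D g : parray m.+1 :=
  fun i j => if j - i \in D then Some (i + g (j - i)) else None.

Lemma band_row0 D g j : band D g 0 j = if j \in D then Some (g j) else None.
Proof. by rewrite /band subr0 add0r. Qed.

Lemma band_col D g c d :
  band D g (c - d) c = if d \in D then Some (c + (g d - d)) else None.
Proof.
rewrite /band opprB addrC subrK; case: ifP => // _.
by rewrite addrAC -addrA.
Qed.

(* A band is |D|-homogeneous as soon as d |-> g d (which controls rows) and
   d |-> g d - d (which controls columns) are injective on D. *)
Lemma band_hom D g :
  {in D &, injective g} -> {in D &, injective (fun d => g d - d)} ->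
  k_homogeneous_pls #|D| (band D g).
Proof.
move=> g_inj h_inj; apply/k_homogeneous_plsE; split.
- move=> r c1 c2 s; rewrite /band.
  case: ifP => // D1 [<-]; case: ifP => // D2 /Some_inj/addrI E.
  by have /addIr := g_inj _ _ D2 D1 E.
- move=> c r1 r2 s; rewrite /transpose -[r1](subKr c) -[r2](subKr c) !band_col.
  case: ifP => // D1 [<-]; case: ifP => // D2 /Some_inj/addrI E.
  by rewrite (h_inj _ _ D2 D1 E).
- move=> s; have cell_inj : {in D &, injective (fun d => (s - g d, s - g d + d))}.
    by move=> d1 d2 D1 D2 /(congr1 fst)/addrI/oppr_inj; apply: g_inj.
  rewrite -(card_in_imset cell_inj); apply: eq_card => -[i j].
  rewrite inE /band /=; apply/eqP/imsetP => [|[d Dd [-> ->]]].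
    by case: ifP => // Dji [<-]; exists (j - i); rewrite // addrK addrC subrK.
  by rewrite addrC addKr Dd subrK.
- move=> r; rewrite -[RHS](card_imset _ (addIr r)).
  apply: eq_card => j; rewrite inE /band; apply/idP/imsetP => [|[d Dd ->]].
    by case: ifP => // Dj _; exists (j - r); rewrite ?subrK.
  by rewrite addrK Dd.
- move=> c; rewrite -[RHS](card_imset _ (subrI c)).
  apply: eq_card => i; rewrite inE /transpose -[i](subKr c) band_col.
  apply/idP/imsetP => [|[d Dd /subrI ->]]; last by rewrite Dd.
  by case: ifP => // Dd _; exists (c - i).
Qed.

Lemma Zp_double_inj (x y : Zn) : odd m.+1 -> x *+ 2 = y *+ 2 -> x = y.
Proof.
move=> oddn Exy; apply/eqP; rewrite -subr_eq0; set z := x - y.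
have : z *+ 2 = 0 by rewrite /z mulrnBl Exy subrr.
rewrite Zp_mulrn => /(congr1 val) /= /eqP.
rewrite -/(dvdn _ _) Gauss_dvdl ?coprimen2 // => dvdz.
apply/eqP/val_inj => /=; apply/eqP; rewrite -leqn0 leqNgt; apply/negP => ltz0.
by have := dvdn_leq ltz0 dvdz; rewrite ltnNge -ltnS ltn_mod.
Qed.

Lemma band_dead D g c : c \notin D ->
  (forall s, (exists2 d, d \in D & g d = s) \/
             (exists2 d, d \in D & c + (g d - d) = s)) ->
  ~ completable (band D g).
Proof.
move=> Dc cover; apply: (@dead_cell _ _ 0 c); first by rewrite band_row0 (negbTE Dc).
move=> s; case: (cover s) => [[d Dd <-]|[d Dd <-]].
  by left; exists d; rewrite band_row0 Dd.
by right; exists (c - d); rewrite band_col Dd.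
Qed.

End CyclicBand.

(* With t = k/2, D is {0, .., 2t} (minus t when k is even),
   so |D| = k; g doubles d modulo 2t+1, and h = g - id sends d to d or to
   d - (2t+1).  Both g and t + h map D onto the interval [0, k), which is
   what makes a dead cell appear when n <= 2k. *)
Section IntervalBand.
Variables m k : nat.
Local Notation n := m.+1.
Local Notation t := k./2.

Definition ib_D : {set 'I_n} :=
  [set d : 'I_n | (d <= t.*2) && (odd k || (d != t :> nat))].
Definition ib_g (d : 'I_n) : 'I_n := inZp (if d <= t then d.*2 else d.*2 - t.*2.+1).
Definition ib_h (d : 'I_n) : 'I_n := inZp (if d <= t then d : nat else n + d - t.*2.+1).

Hypothesis interval_fits : t.*2.+1 <= n.

Lemma card_ib_D : #|ib_D| = k.
Proof.
have cardS := card_ord_lt interval_fits; have lttn : t < n by lia.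
case: (boolP (odd k)) => [oddk|evenk].
  have <- : t.*2.+1 = k by lia.
  by rewrite -[RHS]cardS; apply: eq_card => d; rewrite !inE ltnS oddk andbT.
have <- : #|[set d : 'I_n | d < t.*2.+1] :\ Ordinal lttn| = k.
  by move: cardS; rewrite (cardsD1 (Ordinal lttn)) inE /=; lia.
apply: eq_card => d; rewrite !inE ltnS (negbTE evenk) /= andbC.
by rewrite -val_eqE.
Qed.

Lemma ib_g_val d : d \in ib_D ->
  (ib_g d : nat) = if d <= t then d.*2 else d.*2 - t.*2.+1.
Proof.
by rewrite inE /ib_g /= => /andP[led _]; rewrite modn_small //; case: ifP; lia.
Qed.

Lemma ib_h_val d : d \in ib_D ->
  (ib_h d : nat) = if d <= t then d : nat else n + d - t.*2.+1.
Proof.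
rewrite inE /ib_h /= => /andP[led _]; rewrite modn_small //.
by have := ltn_ord d; case: ifP; lia.
Qed.

(* g = h + id, so h is the column offset g - id of the band. *)
Lemma ib_gE d : ib_g d = (ib_h d + d)%R.
Proof.
apply: val_inj; rewrite /ib_g /ib_h /= modnDml.
case: ifP => led; first by rewrite addnn.
have -> : n + d - t.*2.+1 + d = d.*2 - t.*2.+1 + n by have := ltn_ord d; lia.
by rewrite modnDr.
Qed.

Lemma ib_g_inj : {in ib_D &, injective ib_g}.
Proof.
move=> d1 d2 D1 D2 /(congr1 (@nat_of_ord _)); rewrite !ib_g_val // => E.
move: D1 D2; rewrite !inE => /andP[le1 _] /andP[le2 _].
by apply: ord_inj; move: E; do 2 case: ifP; lia.
Qed.

Lemma ib_h_inj : {in ib_D &, injective ib_h}.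
Proof.
move=> d1 d2 D1 D2 /(congr1 (@nat_of_ord _)); rewrite !ib_h_val // => E.
move: D1 D2; rewrite !inE => /andP[le1 _] /andP[le2 _].
by apply: ord_inj; move: E; do 2 case: ifP; lia.
Qed.

Lemma ib_g_onto (s : 'I_n) : s < k -> exists2 d, d \in ib_D & ib_g d = s.
Proof.
move=> ltsk; pose x := if odd s then s./2 + t.+1 else s./2.
have ltxn : x < n by rewrite /x; case: ifP; lia.
have Dx : Ordinal ltxn \in ib_D by rewrite inE /= /x; case: ifP; lia.
exists (Ordinal ltxn) => //; apply: ord_inj; rewrite ib_g_val //= /x.
by case os: (odd s) => /=; case: ifP; lia.
Qed.

Lemma ib_h_onto x : x < k -> exists2 d, d \in ib_D & (inZp t + ib_h d)%R = inZp x.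
Proof.
move=> ltxk; pose y := if t <= x then x - t else x + t.+1.
have ltyn : y < n by rewrite /y; case: ifP; lia.
have Dy : Ordinal ltyn \in ib_D by rewrite inE /= /y; case: ifP; lia.
exists (Ordinal ltyn) => //; apply: val_inj; rewrite /= modnDm /y.
case: (leqP t x) => letx /=; case: ifP => ? //; try lia.
  by rewrite subnKC.
have -> : t + (n + (x + t.+1) - t.*2.+1) = x + n by lia.
by rewrite modnDr.
Qed.

Lemma ib_hom : k_homogeneous_pls k (band ib_D ib_g).
Proof.
rewrite -card_ib_D; apply: band_hom; first exact: ib_g_inj.
by move=> d1 d2 D1 D2; rewrite !ib_gE !addrK; apply: ib_h_inj.
Qed.

(* When k < n <= 2k (and 2t + 1 < n), column c = a + t with
   a = max(n - k, t + 1) lies outside D, and the symbols c + h(D) form the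
   interval [a, a + k), which together with [0, k) covers Z_n. *)
Lemma ib_not_completable : 1 < k -> t.*2.+1 < n -> n <= k.*2 ->
  ~ completable (band ib_D ib_g).
Proof.
move=> lt1k lt_fit_n le_n2k; pose a := maxn (n - k) t.+1.
have ltatn : a + t < n by rewrite /a; lia.
apply: (@band_dead _ _ _ (inZp (a + t))).
  by rewrite inE /= modn_small //; rewrite /a; lia.
have leak : a <= k by rewrite /a; lia.
have lenak : n <= a + k by rewrite /a; lia.
move=> s; have [ltsk|[x ltxk ->]] := @cyclic_intervals_cover m k a s leak lenak.
  by left; apply: ib_g_onto.
right; have [d Dd hdE] := ib_h_onto ltxk; exists d => //.
by rewrite ib_gE addrK inZpD -addrA hdE.
Qed.

End IntervalBand.

Section SwapEntries.
Variables (n : nat) (P : parray n) (r c c' : 'I_n).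

Definition swap_col (i j : 'I_n) : 'I_n := if i == r then tperm c c' j else j.
Definition swap_entries : parray n := fun i j => P i (swap_col i j).

Lemma swap_colK i : involutive (swap_col i).
Proof. by rewrite /swap_col; case: (i == r) => // j; rewrite tpermK. Qed.

Lemma swap_hom k x y : k_homogeneous_pls k P ->
  P r c = Some x -> P r c' = Some y ->
  (forall i, P i c != Some y) -> (forall i, P i c' != Some x) ->
  k_homogeneous_pls k swap_entries.
Proof.
move=> /k_homogeneous_plsE[rowsP colsP symP filledP filledPt] Prc Prc' noy nox.
have swap_inj i := inv_inj (swap_colK i).
have only_in_r i j s : i != r -> P r (swap_col r j) = Some s -> P i j = Some s -> False.
  move=> nir; rewrite /swap_col eqxx; case: tpermP => [->|->|_ _] Pr Pi.
  - by move: (noy i); rewrite Pi -Pr Prc' eqxx.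
  - by move: (nox i); rewrite Pi -Pr Prc eqxx.
  - by move: nir; rewrite (colsP _ _ _ _ Pi Pr) eqxx.
apply/k_homogeneous_plsE; split.
- by move=> i j1 j2 s P1 P2; apply: (swap_inj i); apply: rowsP P1 P2.
- move=> j i1 i2 s; rewrite /transpose /swap_entries.
  have [->|ni1] := eqVneq i1 r; have [->|ni2] := eqVneq i2 r => // P1 P2.
  + by case: (only_in_r _ _ _ ni2 P1); rewrite /swap_col (negbTE ni2) in P2.
  + by case: (only_in_r _ _ _ ni1 P2); rewrite /swap_col (negbTE ni1) in P1.
  + by rewrite /swap_col (negbTE ni1) (negbTE ni2) in P1 P2; apply: colsP P1 P2.
- move=> s; pose swap_cell (rc : 'I_n * 'I_n) := (rc.1, swap_col rc.1 rc.2).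
  have swap_cell_inj : injective swap_cell.
    by move=> [i1 j1] [i2 j2]; rewrite /swap_cell /= => -[-> /swap_inj ->].
  rewrite -(symP s) -(card_preimset _ swap_cell_inj).
  by apply: eq_card => -[i j]; rewrite !inE /swap_entries /= swap_colK.
- move=> i; rewrite -(filledP i) -(card_preimset _ (swap_inj i)).
  by apply: eq_card => j; rewrite !inE /swap_entries swap_colK.
- move=> j; rewrite -(filledPt j); apply: eq_card => i; rewrite !inE /transpose.
  rewrite /swap_entries /swap_col; case: (eqVneq i r) => [->|//].
  by case: tpermP => [->|->|//]; rewrite Prc Prc'.
Qed.

End SwapEntries.

(* The remaining case: n odd and k = n - 1.  The cyclic band with D = Z_n
   minus {-1} and g = -id is the latin square (i, j) |-> 2i - j with the
   transversal j = i - 1 removed; exchanging the entries 0 and 2 of row 0 is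
   allowed because the cells (1, 0) and (-1, -2) are blank, and then the blank
   cell (1, 0) is dead: its row holds every symbol but 2, its column holds 2. *)
Section OddOrder.
Variable m : nat.
Local Notation n := m.+3.
Local Open Scope ring_scope.
Hypothesis odd_n : odd n.

Definition skew_D : {set 'I_n} := [set~ -1].
Definition skew_band : parray n := band skew_D (fun d => - d).
Definition skew_square : parray n := swap_entries skew_band 0 0 (-2).

Lemma skew_bandE i j :
  skew_band i j = if j - i != -1 then Some (i - (j - i)) else None.
Proof. by rewrite /skew_band /band in_setC1. Qed.

(* g = -id and g - id = -2 id are injective since n is odd. *)
Lemma skew_band_hom : k_homogeneous_pls m.+2 skew_band.
Proof.
have := @band_hom m.+2 skew_D (fun d => - d); rewrite cardsC1 card_ord.
apply=> [d1 d2 _ _|d1 d2 _ _]; first exact: oppr_inj.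
by rewrite -!opprD -!mulr2n => /oppr_inj/(Zp_double_inj odd_n).
Qed.

Lemma minus2_neq_minus1 : (-2 : 'I_n) != -1.
Proof. by rewrite eqr_opp -subr_eq0 addrK oner_eq0. Qed.

(* Swapping the entries 0 = (0, 0) and 2 = (0, -2) is legal: 2 only sits in
   column 0 at the blank cell (1, 0), and 0 in column -2 at (-1, -2). *)
Lemma skew_square_hom : k_homogeneous_pls m.+2 skew_square.
Proof.
apply: (swap_hom (x := 0) (y := 2) skew_band_hom).
- by rewrite skew_bandE subrr eq_sym oppr_eq0 oner_eq0 subrr.
- by rewrite skew_bandE subr0 minus2_neq_minus1 sub0r opprK.
- move=> i; rewrite skew_bandE sub0r; case: ifP => // i_ne1.
  apply: contraNneq i_ne1 => /Some_inj; rewrite opprK -mulr2n.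
  by move/(Zp_double_inj odd_n) => ->; rewrite eqxx.
- move=> i; rewrite skew_bandE; case: ifP => // ne1.
  apply: contraNneq ne1 => /Some_inj Ei.
  have : (i + 1) *+ 2 = 0 *+ 2 by rewrite mul0rn -Ei; ring.
  by move/(Zp_double_inj odd_n)/eqP; rewrite addr_eq0 => /eqP ->; apply/eqP; ring.
Qed.

(* Row 1 is untouched and holds every symbol but 2; column 0 now holds 2. *)
Lemma skew_square_not_completable : ~ completable skew_square.
Proof.
have row1E j : skew_square 1 j = skew_band 1 j.
  by rewrite /skew_square /swap_entries /swap_col oner_eq0.
apply: (@dead_cell _ _ 1 0); first by rewrite row1E skew_bandE sub0r eqxx.
move=> s; have [->|ne2] := eqVneq s 2.
  right; exists 0; rewrite /skew_square /swap_entries /swap_col eqxx tpermL.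
  by rewrite skew_bandE subr0 minus2_neq_minus1 sub0r opprK.
left; exists (2 - s); rewrite row1E skew_bandE -subr_eq0 opprK.
have -> : 2 - s - 1 + 1 = 2 - s by ring.
by rewrite subr_eq0 eq_sym ne2; congr Some; ring.
Qed.

End OddOrder.

Lemma card_setID (T : finType) (A B : pred T) :
  #|[set x | A x]| = #|[set x | A x && B x]| + #|[set x | A x && ~~ B x]|.
Proof. by rewrite -!sum1dep_card (bigID B). Qed.

Lemma sum_nat_cond_const (T : finType) (A : pred T) c :
  \sum_(x | A x) c = #|[set x | A x]| * c.
Proof. by rewrite -sum_nat_const; apply: eq_bigl => x; rewrite inE. Qed.

Lemma card_cells (T : finType) (R : T -> T -> bool) :
  #|[set rc : T * T | R rc.1 rc.2]| = \sum_r #|[set c | R r c]|.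
Proof.
rewrite -sum1dep_card -(pair_big_dep xpredT (fun r c => R r c) (fun _ _ => 1)).
by apply: eq_bigr => r _; rewrite sum1dep_card.
Qed.

Lemma card_split_ord p q (F : pred 'I_(p + q)) :
  #|[set j | F j]| = #|[set a | F (lshift q a)]| + #|[set b | F (@rshift p q b)]|.
Proof. by rewrite -!sum1dep_card big_split_ord. Qed.

Lemma omap_shift_eq (A B : eqType) (f : A -> B) (o : option A) a :
  injective f -> (omap f o == Some (f a)) = (o == Some a).
Proof.
by move=> f_inj; case: o => //= b; rewrite !(inj_eq (@Some_inj _)) (inj_eq f_inj).
Qed.

Section BlockDiagonal.
Variables (p q : nat) (P1 : parray p) (P2 : parray q).
Local Notation lsh := (@lshift p q).
Local Notation rsh := (@rshift p q).

Definition bdiag : parray (p + q) := fun i j =>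
  match split i, split j with
  | inl a, inl b => omap lsh (P1 a b)
  | inr a, inr b => omap rsh (P2 a b)
  | _, _ => None
  end.

Lemma split_lshift (a : 'I_p) : split (lsh a) = inl a.
Proof. exact: (@unsplitK p q (inl a)). Qed.

Lemma split_rshift (b : 'I_q) : split (rsh b) = inr b.
Proof. exact: (@unsplitK p q (inr b)). Qed.

Lemma bdiag_ll a b : bdiag (lsh a) (lsh b) = omap lsh (P1 a b).
Proof. by rewrite /bdiag !split_lshift. Qed.
Lemma bdiag_rr a b : bdiag (rsh a) (rsh b) = omap rsh (P2 a b).
Proof. by rewrite /bdiag !split_rshift. Qed.
Lemma bdiag_lr a b : bdiag (lsh a) (rsh b) = None.
Proof. by rewrite /bdiag split_lshift split_rshift. Qed.
Lemma bdiag_rl a b : bdiag (rsh a) (lsh b) = None.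
Proof. by rewrite /bdiag split_lshift split_rshift. Qed.

Lemma bdiag_blocks i j s : bdiag i j = Some s -> (i < p) = (j < p) /\ (i < p) = (s < p).
Proof.
case: (split_ordP i) => a ->; case: (split_ordP j) => b ->;
  rewrite ?bdiag_ll ?bdiag_lr ?bdiag_rl ?bdiag_rr //.
  by case: (P1 a b) => //= x [<-]; rewrite /= !ltn_ord.
by case: (P2 a b) => //= x [<-]; rewrite /= !ltnNge !leq_addr.
Qed.

Lemma card_bdiag_row_l (F : pred (option 'I_(p + q))) a : F None = false ->
  #|[set j | F (bdiag (lsh a) j)]| = #|[set b | F (omap lsh (P1 a b))]|.
Proof.
move=> FN; rewrite card_split_ord.
have -> : #|[set b | F (bdiag (lsh a) (rsh b))]| = 0.
  by apply: eq_card0 => b; rewrite !inE bdiag_lr FN.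
by rewrite addn0; apply: eq_card => b; rewrite !inE bdiag_ll.
Qed.

Lemma card_bdiag_row_r (F : pred (option 'I_(p + q))) a : F None = false ->
  #|[set j | F (bdiag (rsh a) j)]| = #|[set b | F (omap rsh (P2 a b))]|.
Proof.
move=> FN; rewrite card_split_ord.
have -> : #|[set b | F (bdiag (rsh a) (lsh b))]| = 0.
  by apply: eq_card0 => b; rewrite !inE bdiag_rl FN.
by apply: eq_card => b; rewrite !inE bdiag_rr.
Qed.

Lemma bdiag_latin_rows : latin_rows P1 -> latin_rows P2 -> latin_rows bdiag.
Proof.
move=> L1 L2 r c1 c2 s.
case: (split_ordP r) => a ->; case: (split_ordP c1) => b1 ->;
  case: (split_ordP c2) => b2 ->; rewrite ?bdiag_ll ?bdiag_lr ?bdiag_rl ?bdiag_rr //.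
- case E1: (P1 a b1) => [s1|] //= [<-].
  case E2: (P1 a b2) => [s2|] //= /Some_inj/lshift_inj Es.
  by rewrite Es in E2; rewrite (L1 _ _ _ _ E1 E2).
- case E1: (P2 a b1) => [s1|] //= [<-].
  case E2: (P2 a b2) => [s2|] //= /Some_inj/rshift_inj Es.
  by rewrite Es in E2; rewrite (L2 _ _ _ _ E1 E2).
Qed.


Lemma bdiag_filled_rows k : filled_rows k P1 -> filled_rows k P2 -> filled_rows k bdiag.
Proof.
move=> F1 F2 r; case: (split_ordP r) => a ->.
  rewrite (card_bdiag_row_l (F := fun o => o != None)) // -(F1 a).
  by apply: eq_card => b; rewrite !inE; case: (P1 a b).
rewrite (card_bdiag_row_r (F := fun o => o != None)) // -(F2 a).
by apply: eq_card => b; rewrite !inE; case: (P2 a b).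
Qed.

Lemma card_bdiag_cells (F : pred (option 'I_(p + q))) : F None = false ->
  #|[set rc | F (bdiag rc.1 rc.2)]| =
  #|[set rc | F (omap lsh (P1 rc.1 rc.2))]| + #|[set rc | F (omap rsh (P2 rc.1 rc.2))]|.
Proof.
move=> FN; rewrite (card_cells (fun r c => F (bdiag r c))) big_split_ord /=.
rewrite (card_cells (fun r c => F (omap lsh (P1 r c)))).
rewrite (card_cells (fun r c => F (omap rsh (P2 r c)))).
by congr (_ + _); apply: eq_bigr => a _; rewrite ?card_bdiag_row_l ?card_bdiag_row_r.
Qed.

Lemma bdiag_symbol_count k :
  symbol_count k P1 -> symbol_count k P2 -> symbol_count k bdiag.
Proof.
move=> S1 S2 s; rewrite (card_bdiag_cells (F := fun o => o == Some s)) //.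
have someE (x y : 'I_(p + q)) : (Some x == Some y) = (x == y) by [].
case: (split_ordP s) => a ->.
  rewrite -(S1 a) -[RHS]addn0; congr (_ + _).
    by apply: eq_card => rc; rewrite !inE omap_shift_eq //; apply: lshift_inj.
  apply: eq_card0 => rc; rewrite !inE.
  by case: (P2 rc.1 rc.2) => //= x; rewrite someE eq_rlshift.
rewrite -(S2 a) -[RHS]add0n; congr (_ + _).
  apply: eq_card0 => rc; rewrite !inE.
  by case: (P1 rc.1 rc.2) => //= x; rewrite someE eq_lrshift.
by apply: eq_card => rc; rewrite !inE omap_shift_eq //; apply: rshift_inj.
Qed.

End BlockDiagonal.

(* Transposition commutes with block diagonal sums, so columns of bdiag are
   handled by the row lemmas applied to the transposed blocks. *)
Lemma bdiag_transpose p q (P1 : parray p) (P2 : parray q) :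
  bdiag (transpose P1) (transpose P2) =2 transpose (bdiag P1 P2).
Proof.
by move=> i j; rewrite /transpose /bdiag; case: (split i) => a; case: (split j).
Qed.

Lemma bdiag_hom p q k (P1 : parray p) (P2 : parray q) :
  k_homogeneous_pls k P1 -> k_homogeneous_pls k P2 -> k_homogeneous_pls k (bdiag P1 P2).
Proof.
move=> /k_homogeneous_plsE[R1 C1 S1 F1 G1] /k_homogeneous_plsE[R2 C2 S2 F2 G2].
apply/k_homogeneous_plsE; split.
- exact: bdiag_latin_rows.
- exact: latin_rows_ext (@bdiag_transpose _ _ _ _) (bdiag_latin_rows C1 C2).
- exact: bdiag_symbol_count.
- exact: bdiag_filled_rows.
- exact: filled_rows_ext (@bdiag_transpose _ _ _ _) (bdiag_filled_rows G1 G2).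
Qed.

Lemma card_top p q : #|[set i : 'I_(p + q) | i < p]| = p.
Proof. exact/card_ord_lt/leq_addr. Qed.

Lemma card_bottom p q : #|[set i : 'I_(p + q) | ~~ (i < p)]| = q.
Proof.
have := card_setID xpredT (fun i : 'I_(p + q) => i < p).
by rewrite cardsT card_ord /= card_top => /eqP; rewrite eqn_add2l => /eqP.
Qed.

(* Let P be k-homogeneous and block diagonal with
   respect to 'I_(p + q) = [0, p) + [p, p + q), and L a completion of P.
   A top row of L spends k of its p symbols < p on its filled cells, in the
   top-left block, so at most p - k of them lie in the top-right block; a
   right column has at most q - k symbols < p in its bottom part (its k
   filled cells carry symbols >= p), so at least p + k - q in the top-right
   block.  Counting the symbols < p of that block both ways gives
   q (p + k - q) <= p (p - k), i.e. (p + q) k + p q <= p^2 + q^2. *)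
Section BlockCount.
Variables (p q k : nat) (P : parray (p + q)).
Variable L : 'I_(p + q) -> 'I_(p + q) -> 'I_(p + q).
Hypothesis filledP : filled_rows k P.
Hypothesis filledPt : filled_rows k (transpose P).
Hypothesis blocks :
  forall i j s, P i j = Some s -> (i < p) = (j < p) /\ (i < p) = (s < p).
Hypothesis latinL : is_latin_square L.
Hypothesis extL : forall r c s, P r c = Some s -> L r c = s.
Implicit Types r c : 'I_(p + q).

Definition right_small r := #|[set c : 'I_(p + q) | (L r c < p) && ~~ (c < p)]|.
Definition top_small c := #|[set r : 'I_(p + q) | (L r c < p) && (r < p)]|.

Lemma card_small_row r : #|[set c | L r c < p]| = p.
Proof.
rewrite -[RHS](card_top p q) -[RHS](card_preimset _ (latin_row_inj latinL (r := r))).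
by apply: eq_card => c; rewrite !inE.
Qed.

Lemma card_small_col c : #|[set r | L r c < p]| = p.
Proof.
rewrite -[RHS](card_top p q) -[RHS](card_preimset _ (latin_col_inj latinL (c := c))).
by apply: eq_card => r; rewrite !inE.
Qed.

Lemma top_row_bound r : r < p -> k + right_small r <= p.
Proof.
move=> ltrp; rewrite /right_small -[X in _ <= X](card_small_row r).
rewrite (card_setID _ (fun c : 'I_(p + q) => c < p)) leq_add2r.
rewrite -(filledP r); apply/subset_leq_card/subsetP => c; rewrite !inE.
case Prc: (P r c) => [s|] // _; rewrite (extL Prc).
by have [<- <-] := blocks Prc; rewrite ltrp.
Qed.

Lemma right_col_bound c : ~~ (c < p) -> p + k <= top_small c + q.
Proof.
move=> gecp; rewrite /top_small.
have /= := card_setID (fun r : 'I_(p + q) => L r c < p) (fun r => r < p).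
have /= := card_setID (fun r : 'I_(p + q) => ~~ (r < p)) (fun r => L r c < p).
rewrite card_small_col card_bottom.
have -> : #|[set r : 'I_(p + q) | (L r c < p) && ~~ (r < p)]| =
          #|[set r : 'I_(p + q) | ~~ (r < p) && (L r c < p)]|.
  by apply: eq_card => r; rewrite !inE andbC.
have : k <= #|[set r : 'I_(p + q) | ~~ (r < p) && ~~ (L r c < p)]|.
  rewrite -(filledPt c); apply/subset_leq_card/subsetP => r; rewrite !inE /transpose.
  case Prc: (P r c) => [s|] // _; rewrite (extL Prc).
  by have [Erc Ers] := blocks Prc; rewrite -Ers Erc gecp.
set top := #|[set r : 'I_(p + q) | (L r c < p) && (r < p)]|.
set bottom := #|[set r : 'I_(p + q) | ~~ (r < p) && (L r c < p)]|.
set bottom_big := #|[set r : 'I_(p + q) | ~~ (r < p) && ~~ (L r c < p)]|.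
lia.
Qed.

Lemma double_count : \sum_(r : 'I_(p + q) | r < p) right_small r =
                     \sum_(c : 'I_(p + q) | ~~ (c < p)) top_small c.
Proof.
rewrite /right_small /top_small; under eq_bigr do rewrite -sum1dep_card.
rewrite (exchange_big_dep (fun c : 'I_(p + q) => ~~ (c < p))) /= => [|r c _ /andP[]//].
apply: eq_bigr => c gecp; rewrite -sum1dep_card; apply: eq_bigl => r.
by rewrite gecp andbT andbC.
Qed.

Lemma block_count : (p + q) * k + p * q <= p * p + q * q.
Proof.
set Z := \sum_(r : 'I_(p + q) | r < p) right_small r.
have top_rows : p * k + Z <= p * p.
  have : \sum_(r : 'I_(p + q) | r < p) (k + right_small r) <=
         \sum_(r : 'I_(p + q) | r < p) p by apply: leq_sum => r; apply: top_row_bound.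
  by rewrite big_split /= !sum_nat_cond_const card_top.
have right_cols : q * (p + k) <= Z + q * q.
  have : \sum_(c : 'I_(p + q) | ~~ (c < p)) (p + k) <=
         \sum_(c : 'I_(p + q) | ~~ (c < p)) (top_small c + q).
    by apply: leq_sum => c; apply: right_col_bound.
  by rewrite mulnDr !big_split /= /Z double_count !sum_nat_cond_const card_bottom.
nia.
Qed.

End BlockCount.

Lemma block_not_completable p q k (P : parray (p + q)) :
  k_homogeneous_pls k P ->
  (forall i j s, P i j = Some s -> (i < p) = (j < p) /\ (i < p) = (s < p)) ->
  p * p + q * q < (p + q) * k + p * q ->
  ~ completable P.
Proof.
move=> /k_homogeneous_plsE[_ _ _ filledP filledPt] blocks ineq [L [latinL extL]].
by have := block_count filledP filledPt blocks latinL extL; lia.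
Qed.

Definition cayley_table m : parray m.+1 := fun i j => Some (i + j)%R.

Lemma cayley_table_hom m : k_homogeneous_pls m.+1 (@cayley_table m).
Proof.
have full (F : 'I_m.+1 -> 'I_m.+1) : #|[set j | Some (F j) != None]| = m.+1.
  by rewrite -[RHS](card_ord m.+1) -cardsT; apply: eq_card => j; rewrite !inE.
apply/k_homogeneous_plsE; split; try by move=> r; apply: full.
- by move=> r c1 c2 s [<-] /Some_inj/addrI.
- by move=> c r1 r2 s [<-] /Some_inj/addIr.
- move=> s; rewrite -[RHS](card_ord m.+1) -cardsT.
  rewrite -(card_imset _ (f := fun i => (i, s - i)%R)) => [|i1 i2 [] //].
  apply: eq_card => -[i j]; rewrite !inE /cayley_table /=; apply/eqP/imsetP.
    by move=> /Some_inj <-; exists i; rewrite // addrC addKr.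
  by case=> i' _ [-> ->]; rewrite addrC subrK.
Qed.

Lemma k_homogeneous_exists N k : 0 < k -> k <= N ->
  exists P : parray N, k_homogeneous_pls k P.
Proof.
case: N => [|m] k_gt0 le_kn; first by lia.
have [lt_kn|ge_kn] := ltnP k m.+1.
  by exists (band (ib_D m k) (@ib_g m k)); apply: ib_hom; lia.
have -> : k = m.+1 by lia.
by exists (@cayley_table m); apply: cayley_table_hom.
Qed.

Lemma bdiag_counterexample p q k : 0 < k -> k <= q -> k <= p ->
  p * p + q * q < (p + q) * k + p * q ->
  exists P : parray (p + q), k_homogeneous_pls k P /\ ~ completable P.
Proof.
move=> k_gt0 le_kq le_kp ineq.
have [P1 hom1] := k_homogeneous_exists k_gt0 le_kp.
have [P2 hom2] := k_homogeneous_exists k_gt0 le_kq.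
exists (bdiag P1 P2); split; first exact: bdiag_hom.
exact: block_not_completable (bdiag_hom hom1 hom2) (@bdiag_blocks _ _ P1 P2) ineq.
Qed.

Theorem theorem5p6 (n k : nat) (hk1 : 1 < k) (hkn : k < n) (hk4 : n < 4 * k) :
  exists P : parray n, k_homogeneous_pls k P /\ ~ completable P.
Proof.
have [le_n2k|gt_n2k] := leqP n k.*2.
  case: n hkn hk4 le_n2k => [//|m] hkn hk4 le_n2k.
  (* n <= 2k: an interval band with a dead cell, unless n = 2 (k/2) + 1,
     i.e. n is odd and k = n - 1, where the skew square is used. *)
  have [fits|unfit] := ltnP k./2.*2.+1 m.+1.
    exists (band (ib_D m k) (@ib_g m k)); split; first by apply: ib_hom; lia.
    by apply: ib_not_completable; lia.
  case: m hkn hk4 le_n2k unfit => [|[|m]] hkn hk4 le_n2k unfit; try lia.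
  have -> : k = m.+2 by lia.
  have odd_n : odd m.+3 by lia.
  exists (@skew_square m); split; first exact: skew_square_hom.
  exact: skew_square_not_completable.
(* n > 2k: two blocks of orders p = n - n/2 and q = n/2, both >= k; the
   counting inequality reduces to n < 4k. *)
pose q := n./2; pose p := n - q.
have -> : n = p + q by rewrite /p /q; lia.
by apply: bdiag_counterexample; rewrite /p /q; [lia | lia | lia | nia].
Qed.
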